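(* Fix $r\in[0,1]$ and consider the recombinator dynamics. Then: (1) (Trait payoff monotonicity) For every state $x\in\Delta(A)$, every dimension $d$, and every pair of traits $a_d,a'_d\in\operatorname{supp}_d(x)$, $$u_x(a_d)>u_x(a'_d)\iff\frac{\dot x(a_d)}{x(a_d)}>\frac{\dot x(a'_d)}{x(a'_d)},$$ where $\dot x(a_d)=\sum_{a_{-d}}\dot x(a_d,a_{-d})$. (2) A state $x$ is stationary if and only if both (a) $u_x(a_d)=u_x$ for every $d\in D$ and every $a_d\in\operatorname{supp}_d(x)$, and (b) $(1-r)\frac{u_x(a)}{u_x}+r\,m_x(a)=1$ for every $a\in\operatorname{supp}(x)$.
   Context: Setting: $D=\{1,\dots,|D|\}$ is a finite set of dimensions with $|D|\ge 2$; each $d\in D$ has a finite nonempty set of traits $A_d$; the set of types is $A=\prod_{d\in D}A_d$, a type being $a=(a_d)_{d\in D}$, and we write $a=(a_d,a_{-d})$ with $a_{-d}\in A_{-d}=\prod_{d'\ne d}A_{d'}$; ''$a_d\in a$'' means $a_d$ is the $d$-th component of $a$. A payoff function $u:A\times A\to\mathbb{R}_{>0}$ is given. A state is $x\in\Delta(A)$. Define $u_x(a)=\sum_{a'\in A}x(a')u(a,a')$ and $u_x=\sum_{a\in A}x(a)u_x(a)$. Marginals: $x(a_d)=\sum_{a_{-d}}x(a_d,a_{-d})$. Supports: $\operatorname{supp}(x)=\{a:x(a)>0\}$, $\operatorname{supp}_d(x)=\{a_d:x(a_d)>0\}$. For $x(a_d)>0$ the trait payoff is $u_x(a_d)=\frac{1}{x(a_d)}\sum_{a_{-d}}x(a_d,a_{-d})u_x(a_d,a_{-d})$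 (and $x(a_d)u_x(a_d)$ is understood as $\sum_{a_{-d}}x(a_d,a_{-d})u_x(a_d,a_{-d})$). The recombinator dynamics with recombination rate $r\in[0,1]$ is $$\dot x(a)=(1-r)\frac{x(a)u_x(a)}{u_x}+r\prod_{a_d\in a}\frac{x(a_d)u_x(a_d)}{u_x}-x(a),\qquad a\in A.$$ A state is stationary if $\dot x(a)=0$ for all $a$. For $a\in\operatorname{supp}(x)$, the trait-to-type ratio is $m_x(a)=\frac{\prod_{a_d\in a}x(a_d)}{x(a)}$. *)

From HB Require Import structures.
From mathcomp Require Import all_boot all_order all_algebra.
Unset Printing Implicit Defensive.
Import Order.TTheory GRing.Theory Num.Theory.
Local Open Scope ring_scope.

(* Dimensions D = 'I_n (n = |D|); traits of dimension d : Atr d (a finType);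
   types A = prod_d Atr d, represented as dependent finite functions. *)
Definition type_of {n : nat} (Atr : 'I_n -> finType) : finType :=
  {dffun forall d : 'I_n, Atr d}.

Section Defs.
Context {R : realFieldType} {n : nat} {Atr : 'I_n -> finType}.
Notation A := (type_of Atr).
Variable u : A -> A -> R.

Definition comp (a : A) (d : 'I_n) : Atr d :=
  (a : {dffun forall d : 'I_n, Atr d}) d.

Definition is_state (x : A -> R) : Prop :=
  (forall a, 0 <= x a) /\ \sum_(a : A) x a = 1.

Definition ux (x : A -> R) (a : A) : R := \sum_(a' : A) x a' * u a a'.
Definition uavg (x : A -> R) : R := \sum_(a : A) x a * ux x a.

Definition marg (x : A -> R) (d : 'I_n) (t : Atr d) : R :=
  \sum_(a : A | comp a d == t) x a.

(* x(a_d) u_x(a_d) := sum_{a_{-d}} x(a_d,a_{-d}) u_x(a_d,a_{-d}) *)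
Definition trait_wpay (x : A -> R) (d : 'I_n) (t : Atr d) : R :=
  \sum_(a : A | comp a d == t) x a * ux x a.

(* trait payoff u_x(a_d) (meaningful when x(a_d) > 0) *)
Definition tpay (x : A -> R) (d : 'I_n) (t : Atr d) : R :=
  trait_wpay x d t / marg x d t.

Definition xdot (r : R) (x : A -> R) (a : A) : R :=
  (1 - r) * (x a * ux x a / uavg x)
  + r * \prod_(d : 'I_n) (trait_wpay x d (comp a d) / uavg x)
  - x a.

Definition xdot_marg (r : R) (x : A -> R) (d : 'I_n) (t : Atr d) : R :=
  \sum_(a : A | comp a d == t) xdot r x a.

Definition stationary (r : R) (x : A -> R) : Prop := forall a, xdot r x a = 0.

(* trait-to-type ratio m_x(a) (for x(a) > 0) *)
Definition mratio (x : A -> R) (a : A) : R :=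
  (\prod_(d : 'I_n) marg x d (comp a d)) / x a.

End Defs.

From Pilot Require Import Defs.
From HB Require Import structures.
From mathcomp Require Import all_boot all_order all_algebra.
From mathcomp Require Import ring lra.
Import Order.TTheory GRing.Theory Num.Theory.
Local Open Scope ring_scope.

(* Write s(a_d) := x(a_d) u_x(a_d) / u_x for the payoff share of a trait; the
   shares of each dimension sum to 1.  Summing the recombination term over
   a_{-d} factorises over the dimensions, and all factors but the d-th sum to 1,
   so the marginal dynamics is simply  xdot(a_d) = s(a_d) - x(a_d),  i.e.
   xdot(a_d)/x(a_d) = u_x(a_d)/u_x - 1.  This gives (1), and shows that at a
   stationary state s(a_d) = x(a_d) for every trait, which is (a).  Given these
   equalities the recombination term of a type is r * prod_d x(a_d), so that
   xdot(a) = x(a) ((1-r) u_x(a)/u_x + r m_x(a) - 1) on the support, which gives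
   (b), while off the support xdot(a) = r prod_d x(a_d) >= 0; since the xdot(a)
   sum to 0, (a) and (b) force them all to vanish. *)

Section SumProdDffun.
Variables (R : comNzRingType) (I : finType) (T_ : I -> finType).
Implicit Types F : forall i, T_ i -> R.

Lemma sum_dffun_prod F :
  \sum_(a : {dffun forall i, T_ i}) \prod_i F i (a i) =
  \prod_i \sum_(s : T_ i) F i s.
Proof.
rewrite (reindex (@dffun_of_fprod I T_)); last exact/onW_bij/dffun_of_fprod_bij.
transitivity (\sum_(t : fprod T_) \prod_(i in I) [ffun s => F i s] (t i)).
  by apply: eq_bigr => t _; apply: eq_bigr => i _; rewrite !ffunE.
rewrite big_fprod -(bigA_distr_big_dep _ (fun i j => untag 0 [ffun s => F i s] j)).
apply: eq_bigr => i _; rewrite big_tag; apply: eq_bigr => s _.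
by rewrite /untag; case: (tag s =P i) => // e; rewrite ffunE.
Qed.

(* The constraint a d = t is encoded as a factor of the d-th coordinate;
   [Tagged] is needed to compare elements of [T_ i] and [T_ d]. *)
Lemma sum_dffun_prod_at F d (t : T_ d) :
  \sum_(a : {dffun forall i, T_ i} | a d == t) \prod_i F i (a i) =
  F d t * \prod_(i | i != d) \sum_(s : T_ i) F i s.
Proof.
pose G i (s : T_ i) := F i s * (if i == d then (Tagged T_ s == Tagged T_ t)%:R else 1).
have indicator (a : {dffun forall i, T_ i}) :
    \prod_i (if i == d then (Tagged T_ (a i) == Tagged T_ t)%:R else 1 : R) =
    (a d == t)%:R.
  rewrite (bigD1 d) //= eqxx big1 ?mulr1 ?eq_Tagged // => i.
  by move/negPf->.
transitivity (\sum_(a : {dffun forall i, T_ i}) \prod_i G i (a i)).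
  rewrite big_mkcond; apply: eq_bigr => a _; rewrite big_split /= indicator.
  by case: (a d == t); rewrite ?mulr1 ?mulr0.
rewrite sum_dffun_prod (bigD1 d) //=; congr (_ * _).
  rewrite (bigD1 t) //= big1 ?addr0 /G eqxx ?eq_Tagged ?eqxx ?mulr1 // => s.
  by move/negPf => Hs; rewrite eq_Tagged /= Hs mulr0.
by apply: eq_bigr => i /negPf Hi; apply: eq_bigr => s _; rewrite /G Hi mulr1.
Qed.

End SumProdDffun.

Definition trait_share {R : realFieldType} {n : nat} {Atr : 'I_n -> finType}
  (u : type_of Atr -> type_of Atr -> R) (x : type_of Atr -> R) (d : 'I_n)
  (t : Atr d) : R :=
  trait_wpay u x d t / uavg u x.

Section Recombinator.
Context {R : realFieldType} {n : nat} {Atr : 'I_n -> finType}.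
Notation A := (type_of Atr).
Context {u : A -> A -> R} (u_gt0 : forall a a', 0 < u a a').

Lemma partition_comp (d : 'I_n) (f : A -> R) :
  \sum_(t : Atr d) \sum_(a : A | Defs.comp a d == t) f a = \sum_a f a.
Proof. by rewrite [RHS](partition_big (fun a => Defs.comp a d) predT). Qed.

Context {x : A -> R} (x_state : is_state x).

Lemma state_ge0 a : 0 <= x a. Proof. by case: x_state. Qed.

Lemma marg_ge0 d t : 0 <= marg x d t.
Proof. by apply: sumr_ge0 => a _; apply: state_ge0. Qed.

Lemma state_supp : exists a, 0 < x a.
Proof.
have [a xa|x_le0] := pickP (fun a => 0 < x a); first by exists a.
have : \sum_a x a = 0.
  by apply: big1 => a _; apply/eqP; rewrite eq_le state_ge0 andbT leNgt x_le0.
by case: x_state => _ -> /eqP; rewrite oner_eq0.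
Qed.

Lemma sum_gt0_supp (f : A -> R) : (forall a, 0 < f a) -> 0 < \sum_a x a * f a.
Proof.
move=> f_gt0; have [a xa] := state_supp.
rewrite (bigD1 a) //= ltr_pwDl ?mulr_gt0 //.
by apply: sumr_ge0 => b _; rewrite mulr_ge0 ?state_ge0 ?ltW.
Qed.

Lemma ux_gt0 a : 0 < ux u x a.
Proof. exact: sum_gt0_supp. Qed.

Lemma uavg_gt0 : 0 < uavg u x.
Proof. exact/sum_gt0_supp/ux_gt0. Qed.

Lemma sum_trait_share d : \sum_(t : Atr d) trait_share u x d t = 1.
Proof.
by rewrite -mulr_suml partition_comp -/(uavg u x) divff // gt_eqF ?uavg_gt0.
Qed.

Lemma xdot_margE r d t :
  xdot_marg u r x d t = trait_share u x d t - marg x d t.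
Proof.
rewrite /xdot_marg /xdot sumrB big_split /= -!mulr_sumr -mulr_suml.
rewrite (@sum_dffun_prod_at _ _ _ (trait_share u x)).
rewrite [\prod_(i | _) _]big1 ?mulr1; last first.
  by move=> i _; apply: sum_trait_share.
rewrite /trait_share /marg /trait_wpay; lra.
Qed.

Lemma sum_xdot r : \sum_a xdot u r x a = 0.
Proof.
rewrite /xdot sumrB big_split /= -!mulr_sumr -mulr_suml.
rewrite (@sum_dffun_prod _ _ _ (trait_share u x)).
rewrite [\prod_i _]big1 ?mulr1; last first.
  by move=> i _; apply: sum_trait_share.
case: x_state => _ ->; rewrite -/(uavg u x) divff ?gt_eqF ?uavg_gt0 //; lra.
Qed.

Lemma xdot_marg_rate r d t : 0 < marg x d t ->
  xdot_marg u r x d t / marg x d t = tpay u x d t / uavg u x - 1.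
Proof.
move=> m_gt0; rewrite xdot_margE /trait_share /tpay; field.
by rewrite !gt_eqF ?uavg_gt0.
Qed.

Lemma tpay_uavgP :
  (forall d t, 0 < marg x d t -> tpay u x d t = uavg u x) <->
  (forall d t, trait_share u x d t = marg x d t).
Proof.
have U_neq0 : uavg u x != 0 by rewrite gt_eqF ?uavg_gt0.
split=> [tpayU d t|shareE d t m_gt0].
  have [m_gt0|] := ltP 0 (marg x d t).
    rewrite /trait_share; have -> : trait_wpay u x d t = uavg u x * marg x d t.
      by rewrite -(tpayU d t m_gt0) divfK ?gt_eqF.
    by rewrite mulrAC divff ?mul1r.
  rewrite le_eqVlt ltNge marg_ge0 orbF => /eqP m0.
  have x0 := psumr_eq0P (fun a _ => state_ge0 a) m0.
  by rewrite /trait_share /trait_wpay m0 big1 ?mul0r // => a /x0 ->; rewrite mul0r.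
by rewrite /tpay -[trait_wpay _ _ _ _](divfK U_neq0) -/(trait_share _ _ _ _) shareE
  mulrAC divff ?mul1r ?gt_eqF.
Qed.

Lemma stationary_share r :
  stationary u r x -> forall d t, trait_share u x d t = marg x d t.
Proof.
move=> xdot0 d t; apply/eqP; rewrite -subr_eq0 -(xdot_margE r).
by apply/eqP/big1 => a _; apply: xdot0.
Qed.

Section Balanced.
Context (shareE : forall d t, trait_share u x d t = marg x d t) (r : R) (a : A).

Lemma xdot_balanced :
  xdot u r x a =
  (1 - r) * (x a * ux u x a / uavg u x) + r * \prod_d marg x d (Defs.comp a d) - x a.
Proof.
by rewrite /xdot; congr (_ + r * _ - _); apply: eq_bigr => d _; apply: shareE.
Qed.

Lemma xdot_supp : 0 < x a ->
  xdot u r x a = x a * ((1 - r) * (ux u x a / uavg u x) + r * mratio x a - 1).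
Proof.
move=> xa_gt0; rewrite xdot_balanced /mratio; field.
by rewrite !gt_eqF ?uavg_gt0.
Qed.

Lemma xdot_offsupp_ge0 : 0 <= r -> x a = 0 -> 0 <= xdot u r x a.
Proof.
move=> r_ge0 xa0; rewrite xdot_balanced xa0 !mul0r mulr0 subr0 add0r.
by rewrite mulr_ge0 // prodr_ge0 // => d _; apply: marg_ge0.
Qed.

End Balanced.

End Recombinator.

Theorem proposition2 (R : realFieldType) (n : nat) (Atr : 'I_n -> finType)
  (u : type_of Atr -> type_of Atr -> R) (r : R) :
  (2 <= n)%N ->
  (forall d, 0 < #|Atr d|)%N ->
  (forall a a', 0 < u a a') ->
  0 <= r <= 1 ->
  (* (1) trait payoff monotonicity *)
  (forall (x : type_of Atr -> R), is_state x ->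
     forall (d : 'I_n) (t t' : Atr d),
       0 < marg x d t -> 0 < marg x d t' ->
       (tpay u x d t > tpay u x d t' <->
        xdot_marg u r x d t / marg x d t > xdot_marg u r x d t' / marg x d t'))
  /\
  (* (2) characterization of stationary states *)
  (forall (x : type_of Atr -> R), is_state x ->
     (stationary u r x <->
      ((forall (d : 'I_n) (t : Atr d), 0 < marg x d t -> tpay u x d t = uavg u x)
       /\ (forall a : type_of Atr, 0 < x a ->
             (1 - r) * (ux u x a / uavg u x) + r * mratio x a = 1)))).
Proof.
move=> _ _ u_gt0 /andP[r_ge0 _]; split=> [x x_st d t t' m_gt0 m'_gt0|x x_st].
  rewrite !(xdot_marg_rate u_gt0 x_st) // ltrD2r ltr_pM2r // invr_gt0.
  exact: uavg_gt0.
have shareP := tpay_uavgP u_gt0 x_st.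
split=> [xdot0|[/shareP shareE supp1]].
  have shareE := stationary_share u_gt0 x_st _ xdot0.
  split=> [|a xa_gt0]; first exact/shareP.
  have := xdot0 a; rewrite (xdot_supp u_gt0 x_st shareE) //.
  by move/eqP; rewrite mulf_eq0 gt_eqF //= subr_eq0 => /eqP.
have xdot_ge0 a : 0 <= xdot u r x a.
  have [xa_gt0|] := ltP 0 (x a).
    by rewrite (xdot_supp u_gt0 x_st shareE) // supp1 // subrr mulr0.
  rewrite le_eqVlt ltNge (state_ge0 x_st) orbF => /eqP xa0.
  exact: (xdot_offsupp_ge0 x_st shareE r a r_ge0).
by move=> a; apply: (psumr_eq0P (fun a _ => xdot_ge0 a) (sum_xdot u_gt0 x_st r)).
Qed.
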